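(* Let $\mathbb{A}\colon\mathbb{R}^d\to\mathbb{R}^d$ be Lipschitz continuous and monotone, $T>0$, $X_0\in\mathbb{R}^d$, and let $(X,Z)\in\mathcal{C}^1([0,T),\mathbb{R}^{2d})$ be the solution of \[ \dot X(t)=-Z(t)-\mathbb{A}(X(t)),\qquad \dot Z(t)=-\frac{1}{T-t}Z(t)-\frac{1}{T-t}\mathbb{A}(X(t)),\qquad X(0)=X_0,\ Z(0)=0. \] Then $X$ extends continuously to $[0,T]$ (i.e., $X(T):=\lim_{t\to T^-}X(t)$ exists), and \[ \lim_{t\to T^-}\dot X(t)=\lim_{t\to T^-}\frac{X(t)-X(T)}{t-T}=0. \]
   Context: Monotone: $\langle\mathbb{A}x-\mathbb{A}y,x-y\rangle\ge0$ for all $x,y$. *)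

From HB Require Import structures.
From mathcomp Require Import all_boot all_order all_algebra.
From mathcomp Require Import all_classical all_reals all_analysis.
Set Implicit Arguments. Unset Strict Implicit. Unset Printing Implicit Defensive.
Import Order.TTheory GRing.Theory Num.Theory.
Import numFieldNormedType.Exports.
Local Open Scope ring_scope.

Definition dotv {R : realType} {d : nat} (u v : 'rV[R]_d) : R := (u *m v^T) 0 0.
Definition enorm {R : realType} {d : nat} (u : 'rV[R]_d) : R := Num.sqrt (dotv u u).

Definition lipschitzE {R : realType} {d : nat} (A : 'rV[R]_d -> 'rV[R]_d) : Prop :=
  exists L : R, forall x y, enorm (A x - A y) <= L * enorm (x - y).

Definition monotone_op {R : realType} {d : nat} (A : 'rV[R]_d -> 'rV[R]_d) : Prop :=
  forall x y, 0 <= dotv (A x - A y) (x - y).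

From HB Require Import structures.
From mathcomp Require Import all_boot all_order all_algebra.
From mathcomp Require Import all_classical all_reals all_analysis.
From mathcomp Require Import ring lra.
Import Order.TTheory GRing.Theory Num.Theory.
Import numFieldNormedType.Exports.
Local Open Scope classical_set_scope.
Local Open Scope ring_scope.

(* Put phi t := (Z t + A (X t)) / (T - t), so that X' = - (T - t) phi and Z' = - phi.
   Formally (T - t) phi' = (A o X)', hence d/dt |phi|^2 = - 2 <(A o X)', X'> / (T - t)^2 <= 0
   by monotonicity of A.  Since A is only Lipschitz, this is proved with difference quotients,
   as a bound on the left Dini derivative of |phi|^2.  Hence |phi| <= M := |phi (T / 2)| on
   [T / 2, T[, so |X' t| <= M (T - t) and |X u - X t| <= M (T - t)^2 for T / 2 <= t <= u < T:
   X is Cauchy at T, and both X' t and (X t - X T) / (t - T) are O(T - t). *)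

Section dotv.
Context {R : realType} {d : nat}.
Implicit Types u v w : 'rV[R]_d.

Lemma dotvE u v : dotv u v = \sum_j u 0 j * v 0 j.
Proof. by rewrite /dotv !mxE; apply: eq_bigr => j _; rewrite mxE. Qed.

Lemma dotvC u v : dotv u v = dotv v u.
Proof. by rewrite /dotv -[v *m u^T]trmxK trmx_mul trmxK [RHS]mxE. Qed.

Lemma dotvDl u v w : dotv (u + v) w = dotv u w + dotv v w.
Proof. by rewrite /dotv mulmxDl mxE. Qed.

Lemma dotvZl a u v : dotv (a *: u) v = a * dotv u v.
Proof. by rewrite /dotv -scalemxAl mxE. Qed.

Lemma dotvDr u v w : dotv u (v + w) = dotv u v + dotv u w.
Proof. by rewrite dotvC dotvDl !(dotvC u). Qed.

Lemma dotvZr a u v : dotv u (a *: v) = a * dotv u v.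
Proof. by rewrite dotvC dotvZl dotvC. Qed.

Lemma dotvv_ge0 u : 0 <= dotv u u.
Proof. by rewrite dotvE sumr_ge0 // => j _; rewrite -expr2 sqr_ge0. Qed.

Lemma normr_le_enorm u : `|u| <= enorm u.
Proof.
rewrite [leLHS]/Num.Def.normr /= mx_normrE.
apply: bigmax_le => [|[i j] _ /=]; first exact: sqrtr_ge0.
rewrite (ord1 i) -[leLHS]sqrtr_sqr ler_sqrt ?dotvv_ge0 // dotvE (bigD1 j) //= -expr2 lerDl.
by apply: sumr_ge0 => k _; rewrite -expr2 sqr_ge0.
Qed.

Lemma normr_coord_le u j : `|u 0 j| <= `|u|.
Proof. by rewrite [leRHS]/Num.Def.normr /= mx_normrE (le_bigmax _ _ (0, j)). Qed.

Lemma dotv_le_norm u v : `|dotv u v| <= d%:R * (`|u| * `|v|).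
Proof.
rewrite dotvE (le_trans (ler_norm_sum _ _ _)) //.
rewrite -[d in d%:R]card_ord -sum1_card natr_sum mulr_suml.
by apply: ler_sum => j _; rewrite mul1r normrM ler_pM ?normr_coord_le.
Qed.

Lemma enorm_le_norm u : enorm u <= Num.sqrt d%:R * `|u|.
Proof.
rewrite -(ger0_norm (normr_ge0 u)) -sqrtr_sqr -sqrtrM ?ler0n // ler_sqrt; last first.
  by rewrite mulr_ge0 ?sqr_ge0.
by rewrite (le_trans (ler_norm _)) // (le_trans (dotv_le_norm _ _)) // expr2.
Qed.

Lemma dotvv_continuous : continuous (fun u : 'rV[R]_d => dotv u u).
Proof.
under eq_fun do rewrite dotvE.
apply: continuous_big => [[x y]|j _ u]; first exact: add_continuous.
by apply: continuousM; exact: coord_continuous.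
Qed.

Lemma dotvvD u v : dotv (u + v) (u + v) = dotv u u + 2 * dotv u v + dotv v v.
Proof. by rewrite !(dotvDl, dotvDr) (dotvC v u); ring. Qed.

(* Discrete form of d/dt |phi|^2 <= 0: p = phi s, q = phi t, a is the increment of A o X,
   and r1, r2 are the first-order Taylor remainders of Z and X at s. *)
Lemma sqnorm_sub_le_monotone {p q r1 r2 a : 'rV[R]_d} {tau c : R} :
  0 < tau -> 0 < c -> tau *: (q - p) = r1 + a -> 0 <= dotv a (r2 + c *: p) ->
  tau * (dotv p p - dotv q q) <= 2 * d%:R * (`|p| * `|r1| + `|a| * `|r2| / c).
Proof.
move=> tau0 c0 Eq mono.
have Nq : dotv q q = dotv p p + 2 * dotv p (q - p) + dotv (q - p) (q - p).
  by rewrite -dotvvD [p + _]addrC subrK.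
have Epq : tau * dotv p (q - p) = dotv p r1 + dotv a p.
  by rewrite -dotvZr Eq dotvDr (dotvC p a).
have Ea : - dotv a r2 <= c * dotv a p by move: mono; rewrite dotvDr dotvZr; lra.
have Hr1 : - dotv p r1 <= d%:R * (`|p| * `|r1|).
  by rewrite (le_trans _ (dotv_le_norm p r1)) // -normrN ler_norm.
have Hr2 : - dotv a p <= d%:R * (`|a| * `|r2|) / c.
  rewrite ler_pdivlMr // mulrC mulrN.
  apply: le_trans (_ : dotv a r2 <= _); first lra.
  exact: le_trans (ler_norm _) (dotv_le_norm _ _).
have Nqp : 0 <= tau * dotv (q - p) (q - p) by rewrite mulr_ge0 ?dotvv_ge0 ?ltW.
have -> : tau * (dotv p p - dotv q q)
    = - 2 * (tau * dotv p (q - p)) - tau * dotv (q - p) (q - p) by rewrite Nq; ring.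
have -> : 2 * d%:R * (`|p| * `|r1| + `|a| * `|r2| / c)
    = 2 * (d%:R * (`|p| * `|r1|)) + 2 * (d%:R * (`|a| * `|r2|) / c) by ring.
lra.
Qed.

End dotv.

Lemma lipschitzE_normr {R : realType} {d : nat} (A : 'rV[R]_d -> 'rV[R]_d) :
  lipschitzE A -> exists2 K, 0 <= K & forall x y, `|A x - A y| <= K * `|x - y|.
Proof.
case=> L AL; exists (`|L| * Num.sqrt d%:R) => [|x y]; first by rewrite mulr_ge0 ?sqrtr_ge0.
apply: le_trans (normr_le_enorm _) _; apply: le_trans (AL x y) _.
rewrite -mulrA (le_trans (ler_wpM2r (sqrtr_ge0 _) (ler_norm L))) //.
by rewrite ler_wpM2l ?enorm_le_norm.
Qed.

Section real_functions.
Context {R : realType}.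

Lemma ler0_left_dini_nincr (f : R -> R) (a b : R) : a <= b ->
  {within `[a, b], continuous f} ->
  (forall s, a < s <= b -> forall e, 0 < e ->
     \forall t \near s^'-, f s <= f t + e * (s - t)) ->
  f b <= f a.
Proof.
move=> ab fc fdini; apply/ler_addgt0Pr => e e0.
have k0 : 0 < e / (b - a + 1) by rewrite divr_gt0 //; lra.
set k := e / (b - a + 1) in k0 *.
have kba : k * (b - a) <= e.
  rewrite /k mulrAC ler_pdivrMr; last lra.
  by rewrite ler_wpM2l ?ltW //; lra.
suff : f b - k * b <= f a - k * a by lra.
have gc : {within `[a, b], continuous (fun t => f t - k * t)}.
  move=> x; apply: cvgB; first exact: fc.
  exact/continuous_subspaceT/mulrl_continuous.
(* A maximizer c > a of t |-> f t - k t would contradict the Dini bound with slope k / 2. *)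
have [c cab cmax] := EVT_max ab gc.
move: (cab); rewrite in_itv /= => /andP[ac cb].
have [ac'|] := ltP a c; last first.
  rewrite le_eqVlt ltNge ac orbF => /eqP ca.
  by rewrite -ca; apply: cmax; rewrite in_itv /= ab lexx.
exfalso; near c^'- => t.
have tc : t < c by near: t; exact: nbhs_left_lt.
have fct : f c <= f t + k / 2 * (c - t).
  by near: t; apply: (fdini c); [rewrite ac' cb | rewrite divr_gt0].
have gtc : f t - k * t <= f c - k * c.
  apply: cmax; rewrite in_itv /=; apply/andP; split; last lra.
  by near: t; exact: nbhs_left_ge.
have : 0 < k * (c - t) by rewrite mulr_gt0 // subr_gt0.
have : k / 2 * (c - t) = k * (c - t) / 2 by rewrite mulrAC.
lra.
Unshelve. all: by end_near. Qed.

Lemma is_derive_near_le {V : normedModType R} {f : R -> V} {s : R} {v : V} :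
  is_derive s 1 f v -> forall e, 0 < e ->
  \forall t \near s, `|f t - f s - (t - s) *: v| <= e * `|t - s|.
Proof.
move=> [df <-] e e0; apply/nbhs0P.
have near_quotient : \forall h \near (0 : R), h != 0 ->
    `|'D_1 f s - h^-1 *: (f (h + s) - f s)| <= e.
  have /cvgrPdist_le/(_ e e0) :
      (fun h => h^-1 *: ((f \o shift s) (h *: 1) - f s)) @ 0^' --> 'D_1 f s := df.
  by apply: filterS => h; rewrite /= /shift /= [h%:A]mulr1.
apply: filterS near_quotient => h Hh; rewrite (addrC s h) addrK.
have [-> | h0] := eqVneq h 0; first by rewrite scale0r add0r !subrr !normr0 mulr0.
have -> : f (h + s) - f s - h *: 'D_1 f s = h *: (h^-1 *: (f (h + s) - f s) - 'D_1 f s).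
  by rewrite scalerBr scalerA divff // scale1r.
by rewrite normrZ mulrC ler_wpM2r // distrC Hh.
Qed.

Lemma norm_sub_le_derive_bound (V : normedModType R) (f f' : R -> V) (a b k : R) :
  a <= b -> {within `[a, b], continuous f} ->
  (forall s, a < s <= b -> is_derive s 1 f (f' s)) ->
  (forall s, a < s <= b -> `|f' s| <= k) ->
  `|f b - f a| <= k * (b - a).
Proof.
move=> ab fc df f'k.
suff : `|f b - f a| - k * b <= `|f a - f a| - k * a by rewrite subrr normr0; lra.
apply: (@ler0_left_dini_nincr (fun t => `|f t - f a| - k * t) _ _ ab).
  move=> x; apply: cvgB; last exact/continuous_subspaceT/mulrl_continuous.
  by apply: cvg_norm; apply: cvgB; [exact: fc | exact: cvg_cst].
move=> s sab e e0; rewrite near_withinE; near=> t => ts.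
have Ht : `|f t - f s - (t - s) *: f' s| <= e * `|t - s|.
  by near: t; exact: is_derive_near_le (df s sab) _ e0.
have : `|f s - f a| <= `|f s - f t| + `|f t - f a|.
  by rewrite -(subrKA (f t) (f s) (- f a)) ler_normD.
have : `|f s - f t| <= e * (s - t) + k * (s - t).
  have st : `|t - s| = s - t by rewrite distrC gtr0_norm // subr_gt0.
  rewrite st in Ht; rewrite distrC -[f t - f s](subrK ((t - s) *: f' s)).
  apply: (le_trans (ler_normD _ _)); rewrite normrZ st lerD // mulrC.
  by rewrite ler_wpM2r ?f'k // subr_ge0 ltW.
lra.
Unshelve. all: by end_near. Qed.

Lemma cvg0_at_left_of_norm_le {V : normedModType R} (f : R -> V) (T M : R) :
  (\forall t \near T^'-, `|f t| <= M * (T - t)) -> f t @[t --> T^'-] --> 0.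
Proof.
move=> fM; apply/cvgr0Pnorm_le => e e0.
have M1 : 0 < `|M| + 1 by rewrite ltr_wpDl.
near=> t.
have tT : t < T by near: t; exact: nbhs_left_lt.
have Tte : T - t < e / (`|M| + 1) by near: t; apply: nbhs_left_ltBl; rewrite divr_gt0.
have ft : `|f t| <= M * (T - t) by near: t; exact: fM.
have : M * (T - t) <= `|M| * (e / (`|M| + 1)).
  rewrite (le_trans (ler_norm _)) // normrM [`|T - t|]gtr0_norm ?subr_gt0 //.
  by rewrite ler_wpM2l // ltW.
have : `|M| * (e / (`|M| + 1)) <= e.
  by rewrite mulrCA ger_pMr // ler_pdivrMr // mul1r lerDl.
lra.
Unshelve. all: by end_near. Qed.

Lemma lipschitz_continuous {V W : normedModType R} {f : V -> W} {k : R} :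
  0 <= k -> (forall x y, `|f x - f y| <= k * `|x - y|) -> continuous f.
Proof.
move=> k0 f_lip x; apply/(@cvgrPdist_le _ _ _ (nbhs x)) => e e0; near=> y.
have xy : `|x - y| <= e / (k + 1).
  near: y; apply: (@cvgr_dist_le _ _ _ (nbhs x) _ id x cvg_id).
  by rewrite divr_gt0 // ltr_wpDl.
apply: le_trans (f_lip x y) _; apply: le_trans (ler_wpM2l k0 xy) _.
by rewrite mulrCA ger_pMr // ler_pdivrMr ?ltr_wpDl // mul1r lerDl.
Unshelve. all: by end_near. Qed.

End real_functions.

Section monotone_flow.
Context {R : realType} {d : nat} {A : 'rV[R]_d -> 'rV[R]_d} {K T : R}.
Context {X Z : R -> 'rV[R]_d}.
Hypothesis K_ge0 : 0 <= K.
Hypothesis A_lip : forall x y, `|A x - A y| <= K * `|x - y|.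
Hypothesis A_mono : monotone_op A.
Hypothesis T_gt0 : 0 < T.
Hypothesis X_der : forall t, 0 < t < T -> is_derive t 1 X (- Z t - A (X t)).
Hypothesis Z_der : forall t, 0 < t < T ->
  is_derive t 1 Z (- ((T - t)^-1 *: Z t) - (T - t)^-1 *: A (X t)).

Local Notation sqnorm u := (dotv u u).

Definition phi t := (T - t)^-1 *: (Z t + A (X t)).

Lemma phiE t : t < T -> (T - t) *: phi t = Z t + A (X t).
Proof. by move=> tT; rewrite /phi scalerA divff ?scale1r // subr_eq0 gt_eqF. Qed.

Lemma is_derive_X t : 0 < t < T -> is_derive t 1 X (- ((T - t) *: phi t)).
Proof. by move=> /[dup] /andP[_ tT] /X_der; rewrite phiE // opprD. Qed.

Lemma is_derive_Z t : 0 < t < T -> is_derive t 1 Z (- phi t).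
Proof. by move=> /Z_der; rewrite /phi scalerDr opprD. Qed.

Lemma phi_continuous t : 0 < t < T -> {for t, continuous phi}.
Proof.
move=> /[dup] /andP[_ tT] t_in; apply: continuousZ.
  apply: continuousV; first by rewrite subr_eq0 gt_eqF.
  by apply: continuousB; [exact: cvg_cst | exact: cvg_id].
have cont (f : R -> 'rV[R]_d) f' : is_derive t 1 f f' -> {for t, continuous f}.
  by case=> /derivable1_diffP/differentiable_continuous.
apply: continuousD; first exact: cont _ _ (is_derive_Z _ t_in).
exact: continuous_comp (cont _ _ (is_derive_X _ t_in)) (lipschitz_continuous K_ge0 A_lip _).
Qed.

Lemma phi_increment s t : s < T -> t < T ->
  (T - t) *: (phi t - phi s) = (Z t - Z s - (t - s) *: - phi s) + (A (X t) - A (X s)).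
Proof.
move=> sT tT; rewrite scalerBr phiE // -(subrKA s T (- t)) scalerDl phiE //.
by apply/rowP => j; rewrite !mxE; ring.
Qed.

Lemma norm_A_increment_le s t eta : t < s < T ->
  `|X t - X s - (t - s) *: - ((T - s) *: phi s)| <= eta * (s - t) ->
  `|A (X t) - A (X s)| <= K * ((s - t) * (eta + (T - s) * `|phi s|)).
Proof.
move=> /andP[ts sT] r2_le; apply: le_trans (A_lip _ _) _; apply: (ler_wpM2l K_ge0).
have -> : X t - X s = (X t - X s - (t - s) *: - ((T - s) *: phi s))
    + ((s - t) * (T - s)) *: phi s by apply/rowP => j; rewrite !mxE; ring.
apply: le_trans (ler_normD _ _) _; rewrite normrZ ger0_norm; last first.
  by rewrite mulr_ge0 // subr_ge0 ltW.
by rewrite [leRHS]mulrDr [in leRHS]mulrA (mulrC _ eta) lerD2r.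
Qed.

Lemma sqnorm_phi_sub_le s t eta : t < s < T -> 0 <= eta <= 1 ->
  `|Z t - Z s - (t - s) *: - phi s| <= eta * (s - t) ->
  `|X t - X s - (t - s) *: - ((T - s) *: phi s)| <= eta * (s - t) ->
  (T - s) * (sqnorm (phi s) - sqnorm (phi t))
    <= eta * (2 * d%:R * (`|phi s| + K * ((T - s)^-1 + `|phi s|))) * (s - t).
Proof.
move=> /[dup] tsT /andP[ts sT] /andP[eta0 eta1]; set p := phi s.
set r1 := Z t - Z s - _; set r2 := X t - X s - _; move=> r1_le r2_le.
have h0 : 0 < s - t by rewrite subr_gt0.
have sig0 : 0 < T - s by rewrite subr_gt0.
have c0 : 0 < (s - t) * (T - s) by rewrite mulr_gt0.
have mono : 0 <= dotv (A (X t) - A (X s)) (r2 + ((s - t) * (T - s)) *: p).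
  by rewrite (_ : r2 + _ = X t - X s); [exact: A_mono | apply/rowP => j; rewrite !mxE; ring].
have tau0 : 0 < T - t by rewrite subr_gt0 (lt_trans ts).
have := sqnorm_sub_le_monotone tau0 c0 (phi_increment _ _ sT (lt_trans ts sT)) mono.
have dA_le := norm_A_increment_le _ _ _ tsT r2_le.
set dA := A (X t) - A (X s) in dA_le *; rewrite -/r1 -/p => key.
have r2_term : `|dA| * `|r2| / ((s - t) * (T - s))
    <= eta * (s - t) * (K * ((T - s)^-1 + `|p|)).
  rewrite ler_pdivrMr //; apply: le_trans (ler_pM _ _ dA_le r2_le) _ => //.
  have -> : K * ((s - t) * (eta + (T - s) * `|p|)) * (eta * (s - t))
      = K * (s - t) * (s - t) * (eta * (eta + (T - s) * `|p|)) by ring.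
  have -> : eta * (s - t) * (K * ((T - s)^-1 + `|p|)) * ((s - t) * (T - s))
      = K * (s - t) * (s - t) * (eta * (1 + (T - s) * `|p|)).
    by field; rewrite gt_eqF.
  by apply: ler_wpM2l; rewrite ?ler_wpM2l ?lerD2r // !mulr_ge0 // ltW.
have bound : 2 * d%:R * (`|p| * `|r1| + `|dA| * `|r2| / ((s - t) * (T - s)))
    <= eta * (2 * d%:R * (`|p| + K * ((T - s)^-1 + `|p|))) * (s - t).
  have -> : eta * (2 * d%:R * (`|p| + K * ((T - s)^-1 + `|p|))) * (s - t)
      = 2 * d%:R * (eta * (s - t) * `|p| + eta * (s - t) * (K * ((T - s)^-1 + `|p|))).
    by ring.
  by apply: ler_wpM2l; rewrite ?mulr_ge0 ?ler0n // lerD // mulrC ler_wpM2r.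
have [D_le0|D_gt0] := lerP (sqnorm p - sqnorm (phi t)) 0.
  apply: le_trans (mulr_ge0_le0 (ltW sig0) D_le0) _.
  apply: mulr_ge0 (ltW h0); apply: mulr_ge0 eta0 (mulr_ge0 (mulr_ge0 _ (ler0n _ _)) _) => //.
  by rewrite addr_ge0 // mulr_ge0 // addr_ge0 // invr_ge0 ltW.
apply: le_trans (le_trans key bound); rewrite ler_wpM2r ?(ltW D_gt0) //.
by rewrite lerD2l lerN2 ltW.
Qed.

Lemma sqnorm_phi_left_dini s : 0 < s < T -> forall e, 0 < e ->
  \forall t \near s^'-, sqnorm (phi s) <= sqnorm (phi t) + e * (s - t).
Proof.
move=> s_in e e0; have /andP[_ sT] := s_in.
have sig0 : 0 < T - s by rewrite subr_gt0.
set B := 2 * d%:R * (`|phi s| + K * ((T - s)^-1 + `|phi s|)).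
have B0 : 0 <= B.
  by rewrite mulr_ge0 ?mulr_ge0 ?ler0n // addr_ge0 // mulr_ge0 // addr_ge0 // invr_ge0 ltW.
have B1 : 0 < B + 1 by rewrite ltr_wpDl.
set eta := Num.min 1 (e * (T - s) / (B + 1)).
have eta0 : 0 < eta by rewrite lt_min ltr01 !divr_gt0 // mulr_gt0.
have eta1 : eta <= 1 by rewrite ge_min lexx.
have etaB : eta * B <= e * (T - s).
  have : eta * B <= e * (T - s) / (B + 1) * B by rewrite ler_wpM2r // ge_min lexx orbT.
  move/le_trans; apply; rewrite -mulrA ger_pMr ?mulr_gt0 //.
  by rewrite mulrC ler_pdivrMr // mul1r lerDl.
rewrite near_withinE; near=> t => ts.
have dist : `|t - s| = s - t by rewrite distrC gtr0_norm // subr_gt0.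
have Zt : `|Z t - Z s - (t - s) *: - phi s| <= eta * (s - t).
  by rewrite -dist; near: t; exact: is_derive_near_le (is_derive_Z _ s_in) _ eta0.
have Xt : `|X t - X s - (t - s) *: - ((T - s) *: phi s)| <= eta * (s - t).
  by rewrite -dist; near: t; exact: is_derive_near_le (is_derive_X _ s_in) _ eta0.
have tsT : t < s < T by rewrite ts.
have eta01 : 0 <= eta <= 1 by rewrite eta1 ltW.
have : (T - s) * (sqnorm (phi s) - sqnorm (phi t)) <= (T - s) * (e * (s - t)).
  apply: le_trans (sqnorm_phi_sub_le _ _ _ tsT eta01 Zt Xt) _.
  by rewrite [leRHS]mulrCA mulrA ler_wpM2r // subr_ge0 ltW.
rewrite ler_pM2l //; lra.
Unshelve. all: by end_near. Qed.

Lemma sqnorm_phi_nonincreasing a b : 0 < a -> a <= b -> b < T ->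
  sqnorm (phi b) <= sqnorm (phi a).
Proof.
move=> a0 ab bT.
apply: (@ler0_left_dini_nincr _ (fun t => sqnorm (phi t)) _ _ ab) => [|s /andP[a_s sb]].
  apply: continuous_in_subspaceT => x; rewrite inE /= in_itv /= => /andP[ax xb].
  have x_in : 0 < x < T by rewrite (lt_le_trans a0) // (le_lt_trans xb).
  exact: continuous_comp (phi_continuous _ x_in) (dotvv_continuous _).
by apply: sqnorm_phi_left_dini; rewrite (lt_trans a0) // (le_lt_trans sb).
Qed.

Local Notation M := (enorm (phi (T / 2))).

Lemma norm_phi_le t : T / 2 <= t < T -> `|phi t| <= M.
Proof.
move=> /andP[t0 tT]; apply: le_trans (normr_le_enorm _) _.
by rewrite ler_sqrt ?dotvv_ge0 // sqnorm_phi_nonincreasing // divr_gt0.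
Qed.

Lemma norm_derive1_X_le t : T / 2 <= t < T -> `|derive1 X t| <= M * (T - t).
Proof.
move=> /[dup] t_in /andP[t0 tT].
have t_pos : 0 < t < T by rewrite tT (lt_le_trans _ t0) ?divr_gt0.
rewrite derive1E; have [_ ->] := is_derive_X _ t_pos.
rewrite normrN normrZ gtr0_norm ?subr_gt0 // mulrC.
by rewrite ler_wpM2r ?norm_phi_le // subr_ge0 ltW.
Qed.

Lemma norm_X_sub_le t u : T / 2 <= t <= u -> u < T -> `|X u - X t| <= M * (T - t) ^+ 2.
Proof.
move=> /andP[t0 tu] uT.
have t_pos : 0 < t by rewrite (lt_le_trans _ t0) ?divr_gt0.
have in_T r : t <= r <= u -> 0 < r < T.
  by case/andP=> tr ru; rewrite (lt_le_trans t_pos) // (le_lt_trans ru).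
have Xc : {within `[t, u], continuous X}.
  apply: derivable_within_continuous => r; rewrite in_itv /= => /in_T r_in.
  by case: (is_derive_X _ r_in).
pose X' r := - ((T - r) *: phi r).
apply: le_trans (@norm_sub_le_derive_bound _ _ X X' t u (M * (T - t)) tu Xc _ _) _.
- by move=> r /andP[tr ru]; apply: is_derive_X; rewrite in_T // ltW.
- move=> r /andP[tr ru]; have rT : r < T := le_lt_trans ru uT.
  rewrite normrN normrZ gtr0_norm ?subr_gt0 // mulrC.
  apply: ler_pM; rewrite ?normr_ge0 ?subr_ge0 ?(ltW rT) ?lerD2l ?lerN2 ?(ltW tr) //.
  by rewrite norm_phi_le // rT (le_trans t0 (ltW tr)).
- rewrite expr2 mulrA; apply: ler_wpM2l; last by rewrite lerD2r ltW.
  by rewrite mulr_ge0 ?sqrtr_ge0 // subr_ge0 ltW // (le_lt_trans tu).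
Qed.

Lemma X_cvg : cvg (X t @[t --> T^'-]).
Proof.
apply: cauchy_cvg; apply: cauchy_exP => e e0.
have M1 : 0 < M + 1 by rewrite ltr_wpDl ?sqrtr_ge0.
have w0 : 0 < Num.min (T / 2) (Num.min 1 (e / (M + 1))).
  by rewrite !lt_min ltr01 !divr_gt0.
set w := Num.min _ _ in w0; exists (X (T - w)).
have wT : w <= T / 2 by rewrite ge_min lexx.
have w1 : w <= 1 by rewrite !ge_min lexx orbT.
have we : w <= e / (M + 1) by rewrite !ge_min lexx !orbT.
change (\forall t \near T^'-, ball (X (T - w)) e (X t)).
near=> t; rewrite -ball_normE /ball_ /= distrC.
have wt : T - w < t by near: t; apply: nbhs_left_gt; rewrite ltrBlDr ltrDl.
have tT : t < T by near: t; exact: nbhs_left_lt.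
apply: le_lt_trans (norm_X_sub_le _ _ _ tT) _.
  by rewrite (ltW wt) andbT; lra.
rewrite opprB addrC subrK.
have : M * w ^+ 2 <= M * w by rewrite ler_wpM2l ?sqrtr_ge0 // expr2 ger_pMr.
have : M * w <= M * (e / (M + 1)) by rewrite ler_wpM2l ?sqrtr_ge0.
have : M * (e / (M + 1)) < e by rewrite mulrCA gtr_pMr // ltr_pdivrMr // mul1r ltrDl.
lra.
Unshelve. all: by end_near. Qed.

Local Notation XT := (lim (X t @[t --> T^'-])).

Lemma norm_X_sub_lim_le t : T / 2 <= t < T -> `|X t - XT| <= M * (T - t) ^+ 2.
Proof.
move=> /andP[t0 tT].
have XtXu : `|X t - X u| @[u --> T^'-] --> `|X t - XT|.
  by apply: cvg_norm; apply: cvgB; [exact: cvg_cst | exact: X_cvg].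
rewrite -(cvg_lim _ XtXu) //; apply: limr_le; first by apply/cvg_ex; exists `|X t - XT|.
near=> u; rewrite distrC; apply: norm_X_sub_le; last by near: u; exact: nbhs_left_lt.
by rewrite t0 /=; near: u; exact: nbhs_left_ge.
Unshelve. all: by end_near. Qed.

Lemma norm_X_slope_le t : T / 2 <= t < T -> `|(t - T)^-1 *: (X t - XT)| <= M * (T - t).
Proof.
move=> /[dup] t_in /andP[_ tT]; have Tt : 0 < T - t by rewrite subr_gt0.
rewrite normrZ normfV distrC gtr0_norm // ler_pdivrMl // mulrCA -expr2.
exact: norm_X_sub_lim_le.
Qed.

End monotone_flow.

Theorem corollaryH4 (R : realType) (d : nat) (A : 'rV[R]_d -> 'rV[R]_d)
  (T : R) (X0 : 'rV[R]_d) (X Z : R -> 'rV[R]_d) :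
  lipschitzE A -> monotone_op A -> 0 < T ->
  {within `[0, T[, continuous X} -> {within `[0, T[, continuous Z} ->
  X 0 = X0 -> Z 0 = 0 ->
  (forall t, 0 < t < T -> is_derive t 1 X (- Z t - A (X t))) ->
  (forall t, 0 < t < T ->
     is_derive t 1 Z (- ((T - t)^-1 *: Z t) - (T - t)^-1 *: A (X t))) ->
  exists XT : 'rV[R]_d,
    X t @[t --> T^'-] --> XT /\
    (derive1 X) t @[t --> T^'-] --> (0 : 'rV[R]_d) /\
    ((t - T)^-1 *: (X t - XT)) @[t --> T^'-] --> (0 : 'rV[R]_d).
Proof.
move=> /lipschitzE_normr[K K0 A_lip] A_mono T0 _ _ _ _ X_der Z_der.
have near_T : \forall t \near T^'-, T / 2 <= t < T.
  have T2 : T / 2 < T by rewrite ltr_pdivrMr // ltr_pMr // ltr1n.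
  near=> t; apply/andP; split; near: t; [exact: nbhs_left_ge | exact: nbhs_left_lt].
exists (lim (X t @[t --> T^'-])); split; first exact: X_cvg K0 A_lip A_mono T0 X_der Z_der.
split; apply: cvg0_at_left_of_norm_le; apply: filterS near_T.
  exact: norm_derive1_X_le K0 A_lip A_mono T0 X_der Z_der.
exact: norm_X_slope_le K0 A_lip A_mono T0 X_der Z_der.
Unshelve. all: by end_near. Qed.
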